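(* Let $K$ be a field, $S=K[x_1,\dots,x_n]$, $A\subseteq\{1,\dots,n\}$ and $f=\prod_{j\in A}x_j$. For $L\subseteq A$ let $f_L=\prod_{l\in L}x_l$ and $Z_L=\{x_l^{-1}: l\in L\}\cup\{x_l: l\notin L\}$. Then $$S_f=\bigoplus_{L\subseteq A}f_L^{-1}K[Z_L]$$ is a Stanley decomposition of $S_f$.
   Context: $S_f=K[x_1,\dots,x_n,x_j^{-1}:j\in A]$, with $K$-basis the monomials $x_1^{a_1}\cdots x_n^{a_n}$, $a_j\in\mathbb Z$ for $j\in A$, $a_j\in\mathbb N$ for $j\notin A$. For a monomial $u\in S_f$ and $Z\subseteq\{x_1,\dots,x_n\}\cup\{x_j^{-1}:j\in A\}$ with $\{x_j,x_j^{-1}\}\not\subseteq Z$ for all $j\in A$, $uK[Z]$ is the $K$-span of all $uw$, $w$ a monomial in the elements of $Z$; it is a Stanley space if it is a free $K[Z]$-submodule. A Stanley decomposition of $S_f$ is an expression of $S_f$ as a finite direct sum (of $K$-vector spaces) of Stanley spaces. *)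

From mathcomp Require Import all_boot all_order all_algebra.
Set Implicit Arguments. Unset Strict Implicit. Unset Printing Implicit Defensive.
Import Order.TTheory GRing.Theory Num.Theory.
Local Open Scope ring_scope.

(* Exponent vectors of Laurent monomials x_1^{a_1} ... x_n^{a_n}, a in Z^n. *)
Definition mono (n : nat) := {ffun 'I_n -> int}.

(* Ambient K-vector space: K-valued coefficient functions on Laurent monomials.
   (Elements of S_f are those lying in the span below, i.e. finitely supported.) *)
Definition lpoly (K : fieldType) (n : nat) := mono n -> K.

Definition lincomb (K : fieldType) (T : eqType) (c : seq (K * T)) : T -> K :=
  fun t => \sum_(x <- c) x.1 * (x.2 == t)%:R.

Definition kspan (K : fieldType) (T : eqType) (M : T -> Prop) : (T -> K) -> Prop :=
  fun p => exists c : seq (K * T), (forall x, x \in c -> M x.2) /\ p = lincomb c.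

(* Exponent vectors of monomials of S_f = K[x_1..x_n, x_j^{-1} : j in A]:
   a_j in Z for j in A, a_j in N for j not in A. *)
Definition Sf_mono (n : nat) (A : {set 'I_n}) (a : mono n) : Prop :=
  forall j, j \notin A -> (0 <= a j)%R.

Definition Sf (K : fieldType) (n : nat) (A : {set 'I_n}) : lpoly K n -> Prop :=
  @kspan K (mono n) (Sf_mono A).

(* Variables: (j, true) stands for x_j, (j, false) for x_j^{-1}. *)
Definition var (n : nat) := ('I_n * bool)%type.

Definition admissible_Z (n : nat) (A : {set 'I_n}) (Z : {set var n}) : Prop :=
  (forall j, (j, false) \in Z -> j \in A) /\
  (forall j, ~ ((j, true) \in Z /\ (j, false) \in Z)).

(* Monomials w in the elements of Z, given by their exponents. *)
Definition Zmono (n : nat) := {ffun var n -> nat}.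
Definition is_Zmono (n : nat) (Z : {set var n}) (w : Zmono n) : Prop :=
  forall v, v \notin Z -> w v = 0%N.

Definition mulmono (n : nat) (u : mono n) (w : Zmono n) : mono n :=
  [ffun j => u j + (w (j, true))%:Z - (w (j, false))%:Z].

Definition stanley_span (K : fieldType) (n : nat) (u : mono n) (Z : {set var n})
  : lpoly K n -> Prop :=
  @kspan K (mono n) (fun a => exists w, is_Zmono Z w /\ a = mulmono u w).

(* The K[Z]-module map K[Z] -> S_f, g |-> u g, applied to a polynomial
   g = sum c_k w_k given as a formal combination of Z-monomials. *)
Definition mul_by_u (K : fieldType) (n : nat) (u : mono n) (c : seq (K * Zmono n))
  : lpoly K n := lincomb [seq (x.1, mulmono u x.2) | x <- c].

(* u K[Z] is a Stanley space: u is a monomial of S_f, Z is admissible, and the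
   cyclic K[Z]-module u K[Z] is free, i.e. g |-> u g is injective on K[Z]. *)
Definition is_stanley_space (K : fieldType) (n : nat) (A : {set 'I_n})
  (u : mono n) (Z : {set var n}) : Prop :=
  Sf_mono A u /\ admissible_Z A Z /\
  (forall c : seq (K * Zmono n), (forall x, x \in c -> is_Zmono Z x.2) ->
     mul_by_u u c = (fun _ => 0) -> lincomb c = (fun _ => 0)).

Definition direct_sum_eq (K : fieldType) (T : Type) (I : finType) (P : pred I)
  (V : I -> (T -> K) -> Prop) (W : (T -> K) -> Prop) : Prop :=
  (forall p, W p <-> exists q : I -> T -> K,
      (forall i, P i -> V i (q i)) /\ p = (fun t => \sum_(i | P i) q i t)) /\
  (forall q : I -> T -> K, (forall i, P i -> V i (q i)) ->
      (fun t => \sum_(i | P i) q i t) = (fun _ => 0) ->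
      forall i, P i -> q i = (fun _ => 0)).

Definition stanley_decomposition (K : fieldType) (n : nat) (A : {set 'I_n})
  (I : finType) (P : pred I) (u : I -> mono n) (Z : I -> {set var n}) : Prop :=
  (forall i, P i -> @is_stanley_space K n A (u i) (Z i)) /\
  @direct_sum_eq K (mono n) I P (fun i => @stanley_span K n (u i) (Z i)) (@Sf K n A).

Definition fL_inv (n : nat) (L : {set 'I_n}) : mono n :=
  [ffun j => if j \in L then (-1)%R else 0%R].

Definition Z_L (n : nat) (L : {set 'I_n}) : {set var n} :=
  [set v : var n | if v.2 then v.1 \notin L else v.1 \in L].

From mathcomp Require Import all_boot all_order all_algebra zify.
From Stdlib Require Import FunctionalExtensionality.
Set Implicit Arguments. Unset Strict Implicit. Unset Printing Implicit Defensive.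
Import Order.TTheory GRing.Theory Num.Theory.
Local Open Scope ring_scope.

(* A Laurent monomial x^a lies in f_L^{-1} K[Z_L] exactly when L is the set of
   indices j with a_j < 0.  Hence the monomial basis of S_f is partitioned
   according to this sign pattern L, which ranges over the subsets of A, and
   the span of a partitioned basis is the direct sum of the spans of its blocks.
   Freeness of each f_L^{-1} K[Z_L] holds because w |-> f_L^{-1} w is injective
   on monomials in Z_L, as Z_L never contains both x_j and x_j^{-1}. *)

Section LinearCombinations.

Variables (K : fieldType) (T : eqType).

Lemma lincomb_eq0 (c : seq (K * T)) t :
  (forall x, x \in c -> x.2 != t) -> lincomb c t = 0.
Proof.
by move=> ct; rewrite /lincomb big_seq big1 // => x /ct/negbTE ->; rewrite mulr0.
Qed.

Lemma lincomb_filter (p : pred T) (c : seq (K * T)) t :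
  lincomb [seq x <- c | p x.2] t = (p t)%:R * lincomb c t.
Proof.
rewrite /lincomb big_filter big_mkcond big_distrr /=; apply: eq_bigr => x _.
by case: eqVneq => [->|_]; case: (p _); rewrite ?mulr0 ?mul1r ?mul0r.
Qed.

Lemma lincomb_bigcat (I : finType) (P : pred I) (c : I -> seq (K * T)) t :
  lincomb (\big[cat/[::]]_(i | P i) c i) t = \sum_(i | P i) lincomb (c i) t.
Proof.
apply: (big_morph (fun s => lincomb s t)) => [s1 s2|].
  by rewrite /lincomb big_cat.
by rewrite /lincomb big_nil.
Qed.

Lemma lincomb_map_inj (U : eqType) (M : T -> Prop) (f : T -> U) (c : seq (K * T)) :
  (forall s t, M s -> M t -> f s = f t -> s = t) -> (forall x, x \in c -> M x.2) ->
  lincomb [seq (x.1, f x.2) | x <- c] = (fun _ => 0) -> lincomb c = (fun _ => 0).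
Proof.
move=> f_inj cM fc0; apply: functional_extensionality => t.
have [/mapP[y yc ->]|tNc] := boolP (t \in [seq x.2 | x <- c]); last first.
  by apply: lincomb_eq0 => x xc; apply: contraNneq tNc => <-; apply: map_f.
rewrite -(congr1 (fun g => g (f y.2)) fc0) /lincomb big_map !big_seq.
apply: eq_bigr => x xc /=; have -> // : (f x.2 == f y.2) = (x.2 == y.2).
by apply/eqP/eqP => [fxy|->//]; apply: f_inj fxy; apply: cM.
Qed.

End LinearCombinations.

Section PartitionedBasis.

Variables (K : fieldType) (T : eqType) (I : finType) (P : pred I).
Variables (M : T -> Prop) (B : I -> T -> Prop) (block : T -> I).
Hypothesis memM : forall t, M t <-> P (block t).
Hypothesis memB : forall i t, P i -> B i t <-> block t = i.

Lemma kspan_block_eq0 i (p : T -> K) t :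
  P i -> kspan (B i) p -> block t != i -> p t = 0.
Proof.
move=> Pi [c [cB ->]] ti; apply: lincomb_eq0 => x /cB/(memB _ Pi) xi.
by apply: contra_neq ti => <-.
Qed.

Lemma sum_supported_at (F : I -> K) k :
  (forall i, P i -> i != k -> F i = 0) ->
  \sum_(i | P i) F i = if P k then F k else 0.
Proof.
move=> Fk; case: ifP => Pk.
  by rewrite (bigD1 k) //= big1 ?addr0 // => i /andP[Pi ik]; apply: Fk.
by rewrite big1 // => i Pi; apply: Fk => //; apply: contraFneq Pk => <-.
Qed.

Lemma lincomb_block_decomp (c : seq (K * T)) :
  (forall x, x \in c -> M x.2) ->
  lincomb c = (fun t => \sum_(i | P i) lincomb [seq x <- c | block x.2 == i] t).
Proof.
move=> cM; apply: functional_extensionality => t.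
rewrite (@sum_supported_at _ (block t)) => [|i _ ti]; last first.
  by rewrite (lincomb_filter (fun s => block s == i)) eq_sym (negbTE ti) mul0r.
case: ifP => [_|NPt].
  by rewrite (lincomb_filter (fun s => block s == block t)) eqxx mul1r.
by apply: lincomb_eq0 => x /cM/memM; apply: contraTneq => ->; rewrite NPt.
Qed.

Lemma kspan_partition :
  direct_sum_eq P (fun i => @kspan K T (B i)) (@kspan K T M).
Proof.
split=> [p|q qB q0 i Pi]; first split.
- move=> [c [cM ->]]; exists (fun i => lincomb [seq x <- c | block x.2 == i]).
  split; last exact: lincomb_block_decomp.
  move=> i Pi; exists [seq x <- c | block x.2 == i]; split=> // x.
  by rewrite mem_filter => /andP[/eqP xi _]; apply/memB.
- move=> [q [qB ->]].
  have qc0 i : exists c : seq (K * T), P i ->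
      (forall x, x \in c -> B i x.2) /\ q i = lincomb c.
    have [Pi|_] := boolP (P i); last by exists [::].
    by have [c cq] := qB i Pi; exists c.
  have [c qc] := fin_all_exists qc0.
  exists (\big[cat/[::]]_(i | P i) c i); split.
    apply: (big_ind (fun s => forall x, x \in s -> M x.2)) => //.
      by move=> s1 s2 s1M s2M x; rewrite mem_cat => /orP[/s1M|/s2M].
    by move=> i Pi x /(qc i Pi).1/(memB _ Pi) xi; apply/memM; rewrite xi.
  apply: functional_extensionality => t; rewrite lincomb_bigcat.
  by apply: eq_bigr => i Pi; rewrite (qc i Pi).2.
- apply: functional_extensionality => t.
  have [ti|ti] := eqVneq (block t) i; last exact: kspan_block_eq0 Pi (qB i Pi) ti.
  rewrite -(congr1 (fun g => g t) q0) /= (@sum_supported_at _ i) ?Pi // => j Pj ji.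
  by apply: kspan_block_eq0 Pj (qB j Pj) _; rewrite ti eq_sym.
Qed.

End PartitionedBasis.

Section SignPattern.

Variable n : nat.
Implicit Types (A L : {set 'I_n}) (a : mono n) (w : Zmono n).

Definition neg_support a : {set 'I_n} := [set j | a j < 0].

(* The inverse of w |-> f_L^{-1} w on monomials in Z_L. *)
Definition ZL_cofactor L a : Zmono n :=
  [ffun v : var n => if v.2 then (if v.1 \in L then 0 else absz (a v.1))%N
                     else (if v.1 \in L then absz (a v.1 + 1)%R else 0)%N].

Lemma Sf_monoE A a : Sf_mono A a <-> neg_support a \subset A.
Proof.
split=> [aA|/subsetP aA j jA].
  by apply/subsetP=> j; rewrite inE; apply: contraLR => /aA; rewrite -leNgt.
by rewrite leNgt; apply: contra jA => aj; apply: aA; rewrite inE.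
Qed.

Lemma neg_support_fL_inv L : neg_support (fL_inv L) = L.
Proof. by apply/setP=> j; rewrite inE ffunE; case: (j \in L). Qed.

Lemma admissible_Z_L A L : L \subset A -> admissible_Z A (Z_L L).
Proof.
move=> /subsetP LA; split=> j; rewrite !inE /=; first exact: LA.
by case=> /negP.
Qed.

Lemma mulmono_fL_inv L w j : is_Zmono (Z_L L) w ->
  mulmono (fL_inv L) w j =
    if j \in L then - 1 - (w (j, false))%:Z else (w (j, true))%:Z.
Proof.
move=> wZ; rewrite !ffunE; case: ifP => jL.
  by rewrite (wZ (j, true)) ?inE ?jL // addr0.
by rewrite (wZ (j, false)) ?inE ?jL // add0r subr0.
Qed.

Lemma ZL_cofactorP L a : is_Zmono (Z_L L) (ZL_cofactor L a).
Proof. by move=> [j []]; rewrite inE ffunE /=; case: (j \in L). Qed.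

Lemma ZL_cofactorK L w :
  is_Zmono (Z_L L) w -> ZL_cofactor L (mulmono (fL_inv L) w) = w.
Proof.
move=> wZ; apply/ffunP=> -[j b]; rewrite ffunE /= mulmono_fL_inv //.
have [jL|jNL] := boolP (j \in L); case: b; rewrite /= ?jL ?(negbTE jNL).
- by rewrite (wZ (j, true)) // inE /= jL.
- by rewrite addrAC addNr add0r abszN absz_nat.
- by [].
- by rewrite (wZ (j, false)) // inE /= (negbTE jNL).
Qed.

Lemma mulmono_ZL_cofactor L a :
  neg_support a = L -> mulmono (fL_inv L) (ZL_cofactor L a) = a.
Proof.
move=> <-; apply/ffunP=> j; rewrite mulmono_fL_inv; last exact: ZL_cofactorP.
rewrite !ffunE /=.
by have [aj|aj] := boolP (j \in neg_support a); move: aj; rewrite inE; lia.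
Qed.

Lemma neg_support_mulmono L w :
  is_Zmono (Z_L L) w -> neg_support (mulmono (fL_inv L) w) = L.
Proof.
move=> wZ; apply/setP=> j; rewrite inE mulmono_fL_inv //.
by case: ifP => _; lia.
Qed.

Lemma ZL_monoP L a :
  (exists w, is_Zmono (Z_L L) w /\ a = mulmono (fL_inv L) w) <-> neg_support a = L.
Proof.
split=> [[w [wZ ->]]|aL]; first exact: neg_support_mulmono.
exists (ZL_cofactor L a); split; first exact: ZL_cofactorP.
by rewrite mulmono_ZL_cofactor.
Qed.

End SignPattern.

Theorem proposition2p1 (K : fieldType) (n : nat) (A : {set 'I_n}) :
  @stanley_decomposition K n A _ (fun L : {set 'I_n} => L \subset A)
    (fun L => fL_inv L) (fun L => Z_L L).
Proof.
split=> [L LA|]; last first.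
  exact: (@kspan_partition K _ _ _ _ _ (@neg_support n) (Sf_monoE A)
                           (fun L a _ => ZL_monoP L a)).
split; first by apply/Sf_monoE; rewrite neg_support_fL_inv.
split; first exact: admissible_Z_L.
move=> c cZ; apply: lincomb_map_inj cZ => v w vZ wZ /(congr1 (ZL_cofactor L)).
by rewrite !ZL_cofactorK.
Qed.
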